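(* Let $\tau$ be a pure parabolic isometry of $\mathbb{H}^4$ with fixed point $v\in\widehat{\mathbb{R}^3}$. Then a circle $c$ in $\widehat{\mathbb{R}^3}$ satisfies $v\in c\subset h$ for some $h\in\mathcal{F}_\tau$ if and only if $c\in\mathcal{K}_\tau$.
   Context: Identify $\partial\mathbb{H}^4$ with $\widehat{\mathbb{R}^3}=\mathbb{R}^3\cup\{\infty\}$; circles include Euclidean lines with $\infty$ added. A pure parabolic isometry is a composition of reflections in two hyperplanes tangent at a unique point at infinity. After conjugation by a Möbius map $\phi$ sending $v$ to $\infty$, its boundary action is $x\mapsto x+b$ with $b\neq0$. The permuted pencil $\mathcal{F}_\tau$ is the image under $\phi^{-1}$ of the set of Euclidean planes orthogonal to $b$ (with $\infty$ added). The invariant pencil $\mathcal{T}_\tau$ is the image under $\phi^{-1}$ of the set of Euclidean planes parallel to $b$ (with $\infty$ added). The half-turn bank is $\mathcal{K}_\tau=\{s\cap t: s\in\mathcal{F}_\tau,\ t\in\mathcal{T}_\tau\}$. *)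

From HB Require Import structures.
From mathcomp Require Import all_boot all_order all_algebra.
From mathcomp Require Import boolp classical_sets reals.

Set Implicit Arguments.
Unset Strict Implicit.
Unset Printing Implicit Defensive.

Import Order.TTheory GRing.Theory Num.Theory.
Local Open Scope ring_scope.
Local Open Scope classical_set_scope.

Section Defs.
Variable R : realType.

Definition vec := 'rV[R]_3.
Definition dotv (u w : vec) : R := (u *m w^T) 0 0.
Definition sqnorm (u : vec) : R := dotv u u.

Inductive ext := Fin of vec | Infty.

(* Generalized spheres of \hat{R^3} (= boundaries of hyperplanes of H^4):
   Euclidean spheres with centre c and squared radius r2 > 0, and
   Euclidean planes {x | a . x = d} (a <> 0) with oo added. *)
Inductive gsphere := GSph of vec & R | GPln of vec & R.

Definition gsphere_valid (S : gsphere) : Prop :=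
  match S with
  | GSph _ r2 => 0 < r2
  | GPln a _ => a <> 0
  end.

Definition gsphere_set (S : gsphere) : set ext :=
  match S with
  | GSph c r2 => [set y | exists x, y = Fin x /\ sqnorm (x - c) = r2]
  | GPln a d => [set y | y = Infty \/ exists x, y = Fin x /\ dotv a x = d]
  end.

(* Boundary action of the reflection of H^4 in the hyperplane bounded by S:
   inversion in a sphere, Euclidean reflection in a plane (fixing oo). *)
Definition gsphere_refl (S : gsphere) (y : ext) : ext :=
  match S with
  | GSph c r2 =>
      match y with
      | Infty => Fin c
      | Fin x => if x == c then Infty
                 else Fin (c + (r2 / sqnorm (x - c)) *: (x - c))
      end
  | GPln a d =>
      match y with
      | Infty => Infty
      | Fin x => Fin (x - ((2 * (dotv a x - d)) / sqnorm a) *: a)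
      end
  end.

Inductive mobius : (ext -> ext) -> Prop :=
  | mobius_id : mobius id
  | mobius_comp (S : gsphere) (f : ext -> ext) :
      gsphere_valid S -> mobius f -> mobius (gsphere_refl S \o f).

(* Pure parabolic isometry (boundary action): the composition of the
   reflections in two hyperplanes tangent at a unique point at infinity,
   i.e. two distinct generalized spheres meeting in exactly one point. *)
Definition pure_parabolic (tau : ext -> ext) : Prop :=
  exists S1 S2 : gsphere,
    [/\ gsphere_valid S1, gsphere_valid S2,
        gsphere_set S1 <> gsphere_set S2,
        (exists p, gsphere_set S1 `&` gsphere_set S2 = [set p]) &
        tau = gsphere_refl S1 \o gsphere_refl S2].

(* Circles of \hat{R^3}: Euclidean circles (centre p, plane normal n,
   squared radius r2 > 0) and Euclidean lines with oo added. *)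
Definition is_circle (C : set ext) : Prop :=
  (exists (p n : vec) (r2 : R), n <> 0 /\ 0 < r2 /\
     C = [set y | exists x, y = Fin x /\ dotv (x - p) n = 0
                                     /\ sqnorm (x - p) = r2])
  \/ (exists p d : vec, d <> 0 /\
     C = [set y | y = Infty \/ exists t : R, y = Fin (p + t *: d)]).

Definition ext_plane (a : vec) (d : R) : set ext :=
  [set y | y = Infty \/ exists x, y = Fin x /\ dotv a x = d].

(* Given phi (Moebius, sending the fixed point v to oo) and the translation
   vector b of phi o tau o phi^-1, the permuted pencil, the invariant
   pencil and the half-turn bank.  The image of a set under phi^-1 is its
   preimage under phi. *)
Definition permuted_pencil (phi : ext -> ext) (b : vec) : set (set ext) :=
  [set h | exists d : R, h = phi @^-1` ext_plane b d].

Definition invariant_pencil (phi : ext -> ext) (b : vec) : set (set ext) :=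
  [set h | exists (a : vec) (d : R),
      a <> 0 /\ dotv a b = 0 /\ h = phi @^-1` ext_plane a d].

Definition half_turn_bank (phi : ext -> ext) (b : vec) : set (set ext) :=
  [set k | exists s t, permuted_pencil phi b s /\ invariant_pencil phi b t
                       /\ k = s `&` t].

Definition ext_transl (b : vec) (y : ext) : ext :=
  match y with Fin x => Fin (x + b) | Infty => Infty end.

End Defs.

(* Generalized spheres of \hat{R^3} are the zero sets of
   alpha |x|^2 + w.x + gamma, and a Moebius map acts on the coefficients
   (alpha, w, gamma) by a similarity of the Lorentz form |w|^2 - 4 alpha gamma;
   a circle is cut out by two coefficient vectors with positive definite Gram
   matrix.  Once phi sends v to oo, a circle through v becomes a Euclidean line,
   the meet of two planes with normals w1, w2 and w1 x w2 <> 0.  If this line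
   lies in a plane b.x = d, then b is orthogonal to the direction w1 x w2, so
   the plane through the line with normal a = b x (w1 x w2), which is
   orthogonal to b, exhibits the line as a member of the half-turn bank.
   Conversely, every plane of either pencil contains oo = phi v. *)

From HB Require Import structures.
From mathcomp Require Import all_boot all_order all_algebra.
From mathcomp Require Import boolp classical_sets reals.
From mathcomp Require Import ring lra.

Set Implicit Arguments.
Unset Strict Implicit.
Unset Printing Implicit Defensive.

Import Order.TTheory GRing.Theory Num.Theory.
Local Open Scope ring_scope.
Local Open Scope classical_set_scope.

Section HalfTurnBank.
Variable R : realType.
Implicit Types (u v w x b : vec R).

Definition i0 : 'I_3 := @Ordinal 3 0 isT.
Definition i1 : 'I_3 := @Ordinal 3 1 isT.
Definition i2 : 'I_3 := @Ordinal 3 2 isT.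

Lemma dotvE u w : dotv u w = u 0 i0 * w 0 i0 + u 0 i1 * w 0 i1 + u 0 i2 * w 0 i2.
Proof.
rewrite /dotv mxE !big_ord_recl big_ord0 !mxE addr0 addrA.
have -> : lift ord0 ord0 = i1 :> 'I_3 by apply/val_inj.
have -> : lift ord0 (lift ord0 ord0) = i2 :> 'I_3 by apply/val_inj.
by have -> : ord0 = i0 :> 'I_3 by apply/val_inj.
Qed.

Lemma vec3P u w : u 0 i0 = w 0 i0 -> u 0 i1 = w 0 i1 -> u 0 i2 = w 0 i2 -> u = w.
Proof.
move=> E0 E1 E2; apply/rowP => -[[|[|[|k]]] lt_k3] //.
- by rewrite (_ : Ordinal lt_k3 = i0) //; apply/val_inj.
- by rewrite (_ : Ordinal lt_k3 = i1) //; apply/val_inj.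
- by rewrite (_ : Ordinal lt_k3 = i2) //; apply/val_inj.
Qed.

Definition cross u v : vec R := locked (\row_(i < 3)
  (if val i == 0%N then u 0 i1 * v 0 i2 - u 0 i2 * v 0 i1
   else if val i == 1%N then u 0 i2 * v 0 i0 - u 0 i0 * v 0 i2
   else u 0 i0 * v 0 i1 - u 0 i1 * v 0 i0)).

Lemma cross0E u v : cross u v 0 i0 = u 0 i1 * v 0 i2 - u 0 i2 * v 0 i1.
Proof. by rewrite /cross -lock mxE. Qed.
Lemma cross1E u v : cross u v 0 i1 = u 0 i2 * v 0 i0 - u 0 i0 * v 0 i2.
Proof. by rewrite /cross -lock mxE. Qed.
Lemma cross2E u v : cross u v 0 i2 = u 0 i0 * v 0 i1 - u 0 i1 * v 0 i0.
Proof. by rewrite /cross -lock mxE. Qed.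

Ltac coords := rewrite /sqnorm ?dotvE;
  repeat (rewrite cross0E || rewrite cross1E || rewrite cross2E || rewrite mxE).
Ltac coords_eq := apply: vec3P; coords.

Lemma dotvC u v : dotv u v = dotv v u. Proof. coords; ring. Qed.
Lemma dotvDr u v w : dotv u (v + w) = dotv u v + dotv u w. Proof. coords; ring. Qed.
Lemma dotvBr u v w : dotv u (v - w) = dotv u v - dotv u w. Proof. coords; ring. Qed.
Lemma dotvZr u v (k : R) : dotv u (k *: v) = k * dotv u v. Proof. coords; ring. Qed.
Lemma dotv0r u : dotv u 0 = 0. Proof. coords; ring. Qed.

Lemma sqnormZ (k : R) u : sqnorm (k *: u) = k ^+ 2 * sqnorm u.
Proof. coords; ring. Qed.
Lemma sqnorm_ge0 u : 0 <= sqnorm u.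
Proof. coords; nra. Qed.
Lemma sqnorm_eq0 u : (sqnorm u == 0) = (u == 0).
Proof.
apply/eqP/eqP => [|->]; last by coords; ring.
by coords => sq0; coords_eq; nra.
Qed.
Lemma sqnorm_gt0 u : (0 < sqnorm u) = (u != 0).
Proof. by rewrite lt_neqAle sqnorm_ge0 andbT eq_sym sqnorm_eq0. Qed.

Lemma dotv_crossl u v : dotv u (cross u v) = 0. Proof. coords; ring. Qed.
Lemma dotv_crossr u v : dotv v (cross u v) = 0. Proof. coords; ring. Qed.
Lemma dotv_cross_cycle u v w : dotv u (cross v w) = dotv w (cross u v).
Proof. coords; ring. Qed.
Lemma cross_cross u v w : cross u (cross v w) = dotv u w *: v - dotv u v *: w.
Proof. coords_eq; ring. Qed.
Lemma sqnorm_cross u v : sqnorm (cross u v) = sqnorm u * sqnorm v - dotv u v ^+ 2.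
Proof. coords; ring. Qed.

Lemma orthogonal2_cross u v (y : vec R) : dotv u y = 0 -> dotv v y = 0 ->
  sqnorm (cross u v) *: y = dotv y (cross u v) *: cross u v.
Proof.
have frame : sqnorm (cross u v) *: y = dotv y u *: cross v (cross u v)
    + dotv y v *: cross (cross u v) u + dotv y (cross u v) *: cross u v.
  by coords_eq; ring.
by rewrite frame !(dotvC y) => -> ->; rewrite !scale0r !add0r.
Qed.

Lemma orthogonal2_dotv_cross u v (y : vec R) w : cross u v != 0 ->
  dotv u y = 0 -> dotv v y = 0 -> dotv w (cross u v) = 0 -> dotv w y = 0.
Proof.
move=> uv0 uy vy wuv; have := congr1 (dotv w) (orthogonal2_cross uy vy).
rewrite !dotvZr wuv mulr0 => /eqP; rewrite mulf_eq0 sqnorm_eq0 (negbTE uv0).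
by move=> /eqP.
Qed.

Lemma exists_cross_neq0 d : d != 0 -> exists u, cross d u != 0.
Proof.
move=> d0; pose e k : vec R := \row_(i < 3) (val i == k)%:R.
case: (boolP (cross d (e 0%N) == 0)) => [/eqP de0|]; last by exists (e 0%N).
case: (boolP (cross d (e 1%N) == 0)) => [/eqP de1|]; last by exists (e 1%N).
move: d0 => /eqP; case; coords_eq.
- by move: (congr1 (fun z : vec R => z 0 i2) de1); coords => /=; lra.
- by move: (congr1 (fun z : vec R => z 0 i2) de0); coords => /=; lra.
- by move: (congr1 (fun z : vec R => z 0 i1) de0); coords => /=; lra.
Qed.

Lemma exists_line_point w1 w2 (e1 e2 : R) : cross w1 w2 != 0 ->
  exists x0, dotv w1 x0 = e1 /\ dotv w2 x0 = e2.
Proof.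
set m := cross w1 w2 => m0; have mm0 : sqnorm m != 0 by rewrite sqnorm_eq0.
exists ((sqnorm m)^-1 *: (e1 *: cross w2 m + e2 *: cross m w1)).
rewrite !dotvZr !dotvDr !dotvZr dotv_crossl dotv_crossr.
rewrite [dotv w2 (cross m w1)]dotv_cross_cycle [dotv w1 _]dotv_cross_cycle.
by rewrite -/(sqnorm m); split; field.
Qed.

Lemma line_in_plane_split w1 w2 b (e1 e2 d : R) : b != 0 -> cross w1 w2 != 0 ->
  (forall x, dotv w1 x = e1 -> dotv w2 x = e2 -> dotv b x = d) ->
  exists a (d' : R), [/\ a != 0, dotv a b = 0 & forall x,
    dotv w1 x = e1 /\ dotv w2 x = e2 <-> dotv b x = d /\ dotv a x = d'].
Proof.
set m := cross w1 w2 => b0 m0 line_sub.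
have [x0 [x0w1 x0w2]] := exists_line_point e1 e2 m0.
have bx0 := line_sub _ x0w1 x0w2.
have bm : dotv b m = 0.
  have := line_sub (x0 + m); rewrite !dotvDr dotv_crossl dotv_crossr !addr0.
  by move=> /(_ x0w1 x0w2); lra.
set a := cross b m.
have ba : cross b a = - sqnorm b *: m.
  by rewrite /a cross_cross bm scale0r sub0r scaleNr.
have ba0 : cross b a != 0.
  by rewrite -sqnorm_gt0 ba sqnormZ sqrrN mulr_gt0 ?exprn_gt0 ?sqnorm_gt0.
exists a, (dotv a x0); split.
- by rewrite -sqnorm_gt0 sqnorm_cross bm expr0n subr0 mulr_gt0 ?sqnorm_gt0.
- by rewrite dotvC dotv_crossl.
move=> x; split => [[xw1 xw2]|[bx ax]].
  split; first exact: line_sub.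
  apply/eqP; rewrite -subr_eq0 -dotvBr; apply/eqP.
  apply: (orthogonal2_dotv_cross m0); rewrite ?dotvBr; try lra.
  by rewrite dotvC dotv_crossr.
have perp w : dotv w m = 0 -> dotv w (x - x0) = 0.
  move=> wm; apply: (orthogonal2_dotv_cross ba0); rewrite ?dotvBr ?bx ?bx0 ?ax ?subrr //.
  by rewrite ba dotvZr wm mulr0.
have := perp _ (dotv_crossl w1 w2); have := perp _ (dotv_crossr w1 w2).
by rewrite !dotvBr; lra.
Qed.

(* [(alpha, w, gamma)] stands for the generalized sphere
   [alpha |x|^2 + w.x + gamma = 0], which contains oo iff [alpha = 0]. *)
Definition sphere_coef := (R * vec R * R)%type.
Implicit Types (t s : sphere_coef).

Definition coef_eval t (y : ext R) : R :=
  match y with Fin x => t.1.1 * sqnorm x + dotv t.1.2 x + t.2 | Infty => t.1.1 end.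

Definition zero_locus t : set (ext R) := [set y | coef_eval t y = 0].

Definition coef_form t s : R := dotv t.1.2 s.1.2 - 2 * (t.1.1 * s.2 + s.1.1 * t.2).

Definition gram_pos s1 s2 : Prop :=
  0 < coef_form s1 s1 /\ 0 < coef_form s1 s1 * coef_form s2 s2 - coef_form s1 s2 ^+ 2.

Definition sphere_map (g : ext R -> ext R) : Prop :=
  (forall z, exists y, g y = z) /\
  exists (M : sphere_coef -> sphere_coef) (k : R), [/\ 0 < k,
    forall t, g @^-1` zero_locus (M t) = zero_locus t &
    forall t s, coef_form (M t) (M s) = k * coef_form t s].

Lemma sphere_map_id : sphere_map id.
Proof. by split=> [z|]; [exists z | exists id, 1; split=> // t s; rewrite mul1r]. Qed.

Lemma sphere_map_comp f g : sphere_map f -> sphere_map g -> sphere_map (g \o f).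
Proof.
move=> [f_surj [Mf [kf [kf0 f_loc f_form]]]] [g_surj [Mg [kg [kg0 g_loc g_form]]]].
split=> [z|]; first by have [y <-] := g_surj z; have [x <-] := f_surj y; exists x.
exists (Mg \o Mf), (kg * kf); split=> [|t|t s]; first exact: mulr_gt0.
- by rewrite comp_preimage /= g_loc f_loc.
- by rewrite /= g_form f_form mulrA.
Qed.

Lemma sphere_map_transl e : sphere_map (ext_transl e).
Proof.
split=> [[x|]|]; [by exists (Fin (x - e)); rewrite /= subrK | by exists (Infty R) |].
exists (fun t => (t.1.1, t.1.2 - (2 * t.1.1) *: e,
                  t.1.1 * sqnorm e - dotv t.1.2 e + t.2)), 1.
split=> // [[[al w] ga]|[[al w] ga] [[al' w'] ga']]; last first.
  by rewrite /coef_form /=; coords; ring.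
rewrite predeqE => -[x|] //=; rewrite /preimage /zero_locus /=.
by have -> : al * sqnorm (x + e) + dotv (w - (2 * al) *: e) (x + e)
  + (al * sqnorm e - dotv w e + ga) = al * sqnorm x + dotv w x + ga by coords; ring.
Qed.

Definition ext_inv (r2 : R) (y : ext R) : ext R :=
  match y with
  | Fin x => if x == 0 then Infty R else Fin ((r2 / sqnorm x) *: x)
  | Infty => Fin 0
  end.

Lemma ext_invK (r2 : R) : r2 != 0 -> involutive (ext_inv r2).
Proof.
move=> r2_0 [x|] /=; last by rewrite eqxx.
have [-> //|x0] := eqVneq x 0.
have xx0 : sqnorm x != 0 by rewrite sqnorm_eq0.
have k0 : r2 / sqnorm x != 0 by rewrite mulf_neq0 ?invr_eq0.
rewrite /= scaler_eq0 (negbTE k0) (negbTE x0) /= scalerA sqnormZ.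
by congr Fin; rewrite -[RHS]scale1r; congr (_ *: _); field; rewrite r2_0 xx0.
Qed.

Lemma sphere_map_inv (r2 : R) : 0 < r2 -> sphere_map (ext_inv r2).
Proof.
move=> r2_gt0; have r2_0 : r2 != 0 by rewrite gt_eqF.
split=> [z|]; first by exists (ext_inv r2 z); rewrite ext_invK.
exists (fun t => (t.2, r2 *: t.1.2, t.1.1 * r2 ^+ 2)), (r2 ^+ 2).
split=> [|[[al w] ga]|[[al w] ga] [[al' w'] ga']]; first exact: exprn_gt0.
- rewrite predeqE => -[x|]; rewrite /preimage /zero_locus /=; last first.
    rewrite /sqnorm !dotv0r mulr0 !add0r; split=> [/eqP|->]; last by rewrite mul0r.
    by rewrite mulf_eq0 expf_eq0 (negbTE r2_0) andbF orbF => /eqP.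
  have [->|x0] := eqVneq x 0; first by rewrite /sqnorm !dotv0r mulr0 !add0r.
  have xx0 : sqnorm x != 0 by rewrite sqnorm_eq0.
  rewrite /= sqnormZ dotvZr dotvC dotvZr dotvC.
  have -> : ga * ((r2 / sqnorm x) ^+ 2 * sqnorm x) + r2 / sqnorm x * (r2 * dotv w x)
    + al * r2 ^+ 2 = r2 ^+ 2 / sqnorm x * (al * sqnorm x + dotv w x + ga).
    by field.
  have k0 : r2 ^+ 2 / sqnorm x != 0 by rewrite mulf_neq0 ?invr_eq0 ?expf_neq0.
  split=> [/eqP|->]; last by rewrite mulr0.
  by rewrite mulf_eq0 (negbTE k0) => /eqP.
- by rewrite /coef_form /=; coords; ring.
Qed.

Lemma gsphere_refl_sphereE c (r2 : R) :
  gsphere_refl (GSph c r2) = ext_transl c \o ext_inv r2 \o ext_transl (- c).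
Proof.
apply: funext => -[x|] /=; last by rewrite add0r.
by rewrite subr_eq0; case: eqP => //= _; rewrite addrC.
Qed.

Lemma sphere_map_plane_refl a (d : R) : a != 0 -> sphere_map (gsphere_refl (GPln a d)).
Proof.
move=> a0; have aa0 : sqnorm a != 0 by rewrite sqnorm_eq0.
have aa0E := aa0; rewrite /sqnorm dotvE in aa0E.
have reflK : involutive (gsphere_refl (GPln a d)).
  by move=> [x|] //=; congr Fin; coords_eq; field.
split=> [z|]; first by exists (gsphere_refl (GPln a d) z); rewrite reflK.
pose k := 2 / sqnorm a; pose e := (k * d) *: a.
exists (fun t => (t.1.1, t.1.2 - (k * dotv a t.1.2) *: a - (2 * t.1.1) *: e,
                  t.1.1 * sqnorm e + dotv t.1.2 e + t.2)), 1.
split=> // [[[al w] ga]|[[al w] ga] [[al' w'] ga']]; last first.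
  by rewrite /coef_form /= mul1r /e /k; coords; field.
rewrite predeqE => -[x|] //=; rewrite /preimage /zero_locus /= /e /k.
suff -> : al * sqnorm (x - (2 * (dotv a x - d) / sqnorm a) *: a)
  + dotv (w - (2 / sqnorm a * dotv a w) *: a - (2 * al) *: ((2 / sqnorm a * d) *: a))
      (x - (2 * (dotv a x - d) / sqnorm a) *: a)
  + (al * sqnorm ((2 / sqnorm a * d) *: a) + dotv w ((2 / sqnorm a * d) *: a) + ga)
  = al * sqnorm x + dotv w x + ga by [].
by coords; field.
Qed.

Lemma mobius_sphere_map f : mobius f -> sphere_map f.
Proof.
elim=> [|[c r2|a d] g S_ok _ g_map]; first exact: sphere_map_id.
- rewrite gsphere_refl_sphereE; apply: sphere_map_comp => //.
  apply: sphere_map_comp; first exact: sphere_map_transl.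
  by apply: sphere_map_comp; [exact: sphere_map_inv | exact: sphere_map_transl].
- by apply: sphere_map_comp => //; apply: sphere_map_plane_refl; apply/eqP.
Qed.

Lemma gram_pos_planesE w1 w2 (g1 g2 : R) :
  gram_pos (0, w1, g1) (0, w2, g2) <-> cross w1 w2 != 0.
Proof.
rewrite /gram_pos /coef_form /= !mul0r !addr0 !mulr0 !subr0 -sqnorm_cross sqnorm_gt0.
split=> [[] //|w12]; split=> //; rewrite sqnorm_gt0.
apply: contraNneq w12 => ->; rewrite -sqnorm_eq0 sqnorm_cross /sqnorm dotv0r dotvC dotv0r.
by rewrite mul0r expr0n subrr.
Qed.

Lemma circle_zero_loci c : is_circle c ->
  exists s1 s2, gram_pos s1 s2 /\ c = zero_locus s1 `&` zero_locus s2.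
Proof.
case=> [[p [n [r2 [/eqP n0 [r2_gt0 ->]]]]]|[p [d [/eqP d0 ->]]]].
  exists (0, n, - dotv p n), (1, (-2) *: p, sqnorm p - r2); split.
    rewrite /gram_pos /coef_form /=.
    have -> : dotv n ((-2) *: p) - 2 * (0 * (sqnorm p - r2) + 1 * - dotv p n) = 0.
      by coords; ring.
    have -> : dotv ((-2) *: p) ((-2) *: p) - 2 * (1 * (sqnorm p - r2) + 1 * (sqnorm p - r2))
      = 4 * r2 by coords; ring.
    rewrite !mul0r addr0 mulr0 subr0 expr0n subr0 -/(sqnorm n).
    by rewrite !mulr_gt0 ?sqnorm_gt0.
  rewrite predeqE => -[x|] /=; last by split=> [[? []] //|[_ /eqP]]; rewrite oner_eq0.
  rewrite /zero_locus /=.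
  have -> : 0 * sqnorm x + dotv n x + - dotv p n = dotv (x - p) n by coords; ring.
  have -> : 1 * sqnorm x + dotv ((-2) *: p) x + (sqnorm p - r2) = sqnorm (x - p) - r2.
    by coords; ring.
  split=> [[x' [[<-] [-> ->]]]|[xpn /eqP]]; first by rewrite subrr.
  by rewrite subr_eq0 => /eqP xpr; exists x.
have [u du0] := exists_cross_neq0 d0.
pose w1 := cross d u; pose w2 := cross d w1.
have w1d : dotv w1 d = 0 by rewrite dotvC dotv_crossl.
have w2d : dotv w2 d = 0 by rewrite dotvC dotv_crossl.
have w12 : cross w1 w2 = sqnorm w1 *: d by rewrite cross_cross w1d scale0r subr0.
have w12_0 : sqnorm (cross w1 w2) != 0.
  by rewrite sqnorm_eq0 w12 scaler_eq0 negb_or sqnorm_eq0 du0 d0.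
exists (0, w1, - dotv w1 p), (0, w2, - dotv w2 p); split.
  by apply/gram_pos_planesE; rewrite -sqnorm_eq0.
rewrite predeqE => -[x|] /=; last by split=> _; [split | left].
rewrite /zero_locus /= !mul0r !add0r -!dotvBr.
split=> [[//|[t [->]]]|[xw1 xw2]].
  by rewrite addrAC subrr add0r !dotvZr w1d w2d mulr0.
right; exists (dotv (x - p) (cross w1 w2) * sqnorm w1 / sqnorm (cross w1 w2)).
congr Fin; rewrite -[x in LHS](subrK p) addrC; congr (p + _).
apply: (scalerI w12_0); rewrite orthogonal2_cross // {2}w12.
by rewrite !scalerA; congr (_ *: _); field.
Qed.

Lemma mobius_preimage_circle phi c : mobius phi -> is_circle c ->
  exists s1 s2, gram_pos s1 s2 /\ c = phi @^-1` (zero_locus s1 `&` zero_locus s2).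
Proof.
move=> /mobius_sphere_map[_ [M [k [k_gt0 M_loc M_form]]]].
move=> /circle_zero_loci[t1 [t2 [[t11 t12] ->]]].
exists (M t1), (M t2); split; last by rewrite preimage_setI !M_loc.
rewrite /gram_pos !M_form; split; first exact: mulr_gt0.
have -> : k * coef_form t1 t1 * (k * coef_form t2 t2) - (k * coef_form t1 t2) ^+ 2
  = k ^+ 2 * (coef_form t1 t1 * coef_form t2 t2 - coef_form t1 t2 ^+ 2) by ring.
by rewrite mulr_gt0 ?exprn_gt0.
Qed.

Lemma ext_plane_Fin a (d : R) x : ext_plane a d (Fin x) <-> dotv a x = d.
Proof. by split=> [[//|[x' [[<-]]]]|ax]; last by right; exists x. Qed.

Lemma zero_locus_plane w (g : R) : zero_locus (0, w, g) = ext_plane w (- g).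
Proof.
rewrite predeqE => -[x|]; last by split=> _; [left|].
rewrite ext_plane_Fin /zero_locus /= mul0r add0r.
split=> [/eqP|->]; last exact: addNr.
by rewrite addr_eq0 => /eqP.
Qed.

Lemma ext_planes_meet_split w1 w2 b (e1 e2 d : R) : b != 0 -> cross w1 w2 != 0 ->
  ext_plane w1 e1 `&` ext_plane w2 e2 `<=` ext_plane b d ->
  exists a (d' : R), [/\ a != 0, dotv a b = 0 &
    ext_plane w1 e1 `&` ext_plane w2 e2 = ext_plane b d `&` ext_plane a d'].
Proof.
move=> b0 w12 line_sub.
have [|a [d' [a0 ab line_eq]]] := line_in_plane_split (e1 := e1) (e2 := e2) (d := d) b0 w12.
  by move=> x xw1 xw2; apply/ext_plane_Fin/line_sub; split; apply/ext_plane_Fin.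
exists a, d'; split=> //; rewrite predeqE => -[x|]; last by split=> _; split; left.
by rewrite /= !ext_plane_Fin.
Qed.

Lemma half_turn_bank_through_pole (phi : ext R -> ext R) b (v : ext R)
    (c : set (ext R)) : phi v = Infty R -> half_turn_bank phi b c ->
  c v /\ exists h, permuted_pencil phi b h /\ c `<=` h.
Proof.
move=> phi_v [_ [_ [[d ->] [[a [d' [_ [_ ->]]]] ->]]]].
split; first by rewrite /= /preimage phi_v; split; left.
by exists (phi @^-1` ext_plane b d); split; [exists d | apply: subIsetl].
Qed.

End HalfTurnBank.

Theorem theorem5p8 (R : realType) (tau : ext R -> ext R) (v : ext R)
    (phi : ext R -> ext R) (b : vec R) :
  pure_parabolic tau ->
  tau v = v ->
  mobius phi ->
  phi v = Infty R ->
  b != 0 ->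
  (forall y, phi (tau y) = ext_transl b (phi y)) ->
  forall c : set (ext R), is_circle c ->
    ((c v /\ exists h, permuted_pencil phi b h /\ c `<=` h)
     <-> half_turn_bank phi b c).
Proof.
move=> _ _ mob_phi phi_v b0 _ c circ_c.
have [phi_surj _] := mobius_sphere_map mob_phi.
have [[[al1 w1] g1] [[[al2 w2] g2] [gram ->]]] := mobius_preimage_circle mob_phi circ_c.
split=> [[c_v [_ [[d ->] c_sub]]]|]; last exact: half_turn_bank_through_pole.
have [al1_0 al2_0] : al1 = 0 /\ al2 = 0 by move: c_v; rewrite /= /preimage phi_v.
move: gram c_sub; rewrite al1_0 al2_0 !zero_locus_plane => /gram_pos_planesE w12 c_sub.
have line_sub : ext_plane w1 (- g1) `&` ext_plane w2 (- g2) `<=` ext_plane b d.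
  by move=> z; have [y <-] := phi_surj z; apply: c_sub.
have [a [d' [a0 ab ->]]] := ext_planes_meet_split b0 w12 line_sub.
exists (phi @^-1` ext_plane b d), (phi @^-1` ext_plane a d').
split; [by exists d | split; last exact: preimage_setI].
by exists a, d'; split=> //; apply/eqP.
Qed.
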